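(* Let $\underline{X}$ be an observation from a distribution $P_{(\theta,\underline{\eta})}$ indexed by $(\theta,\underline{\eta})$ in a parameter space $H$, with $\theta$ a real parameter of interest, and fix $\alpha\in[0,1]$. For a confidence interval $C(\underline{X})=[L(\underline{X}),U(\underline{X})]$ for $\theta$, define its modification $C^M$ by $$T(\underline{x},\theta_0)=\min\{\theta_0-L(\underline{x}),\,U(\underline{x})-\theta_0\},\quad h(\underline{x},\theta_0)=\sup_{(\theta,\underline{\eta})\in H,\ \theta=\theta_0}P_{(\theta,\underline{\eta})}\big(T(\underline{X},\theta_0)\le T(\underline{x},\theta_0)\big),$$ $$C^M(\underline{x})=\overline{\{\theta_0: h(\underline{x},\theta_0)>\alpha\}}.$$ If $C_0(\underline{X})$ is a $1-\alpha$ exact confidence interval for $\theta$, then $C_0^M(\underline{x})\subseteq C_0(\underline{x})$ for every $\underline{x}$. Consequently, for any confidence interval $C_0(\underline{X})$ of any level, $C_0^{M2}(\underline{x})=(C_0^M)^M(\underline{x})\subseteq C_0^M(\underline{x})$ for every $\underline{x}$.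
   Context: For a set $A$ of parameter values in $\mathbb{R}$, $\overline{A}$ denotes the smallest closed simply connected set (closed interval) containing $A$. An interval $C(\underline{X})$ for $\theta$ is ''$1-\alpha$ exact'' if $\inf_{(\theta,\underline{\eta})\in H}P_{(\theta,\underline{\eta})}(\theta\in C(\underline{X}))\ge1-\alpha$. *)

From HB Require Import structures.
From mathcomp Require Import all_boot all_order all_algebra.
From mathcomp Require Import all_classical all_reals all_analysis measurable_realfun.
Set Implicit Arguments. Unset Strict Implicit. Unset Printing Implicit Defensive.
Import Order.TTheory GRing.Theory Num.Theory numFieldNormedType.Exports.
Local Open Scope classical_set_scope.
Local Open Scope ring_scope.
Local Open Scope ereal_scope.

Section Defs.
Context {d : measure_display} {X : measurableType d} {R : realType} {Eta : Type}.
Variables (H : set (R * Eta)) (P : R * Eta -> probability X R) (alpha : R).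

(* The closed interval C(x) = [L x, U x] (endpoints in the extended reals,
   so that unbounded and empty intervals are allowed), as a set of reals. *)
Definition ival (L U : X -> \bar R) (x : X) : set R :=
  [set t : R | L x <= t%:E <= U x].

Definition exact_ci (L U : X -> \bar R) : Prop :=
  forall p, H p -> P p [set x | ival L U x p.1]
                   >= (1 - alpha)%:E.

Definition Tstat (L U : X -> \bar R) (x : X) (theta0 : R) : \bar R :=
  mine (theta0%:E - L x) (U x - theta0%:E).

Definition hfun (L U : X -> \bar R) (x : X) (theta0 : R) : \bar R :=
  ereal_sup [set P p [set y | Tstat L U y theta0 <= Tstat L U x theta0]
            | p in [set p | H p /\ p.1 = theta0]].

Definition cl_hull (A : set R) : set R :=
  \bigcap_(B in [set B : set R | closed B /\ is_interval B /\ A `<=` B]) B.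

Definition modCI (L U : X -> \bar R) (x : X) : set R :=
  cl_hull [set theta0 | hfun L U x theta0 > alpha%:E].

Definition modL (L U : X -> \bar R) (x : X) : \bar R :=
  ereal_inf [set t%:E | t in modCI L U x].
Definition modU (L U : X -> \bar R) (x : X) : \bar R :=
  ereal_sup [set t%:E | t in modCI L U x].

End Defs.

From HB Require Import structures.
From mathcomp Require Import all_boot all_order all_algebra.
From mathcomp Require Import all_classical all_reals all_analysis measurable_realfun.
From mathcomp Require Import lra.
Set Implicit Arguments. Unset Strict Implicit. Unset Printing Implicit Defensive.
Import Order.TTheory GRing.Theory Num.Theory numFieldNormedType.Exports.
Local Open Scope classical_set_scope.
Local Open Scope ring_scope.

(* If theta0 lies outside the closed interval C0(x), then T(x, theta0) < 0, so
   the event {T(X, theta0) <= T(x, theta0)} forces theta0 outside C0(X); by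
   exactness it has probability at most alpha under every parameter with
   theta = theta0, hence h(x, theta0) <= alpha and theta0 is not in C0^M(x).
   For the second claim, C^M is itself 1 - alpha exact for any C: theta lies
   outside C^M(X) only when the p-value P(T(Y, theta) <= T(X, theta)) is at
   most alpha, and p-values are super-uniform.  The first claim applied to
   C^M then gives C^M2 within C^M. *)

Section ereal_cofinal.
Context {R : realType}.
Local Open Scope ereal_scope.

Lemma ereal_cofinal_seq (s : \bar R) : s != -oo ->
  exists u : nat -> \bar R, [/\ nondecreasing_seq u, (forall n, u n < s) &
    (forall v, v < s -> exists n, v <= u n)].
Proof.
case: s => [r||] // _.
- exists (fun n => (r - n.+1%:R^-1)%:E); split.
  + move=> n m nm; rewrite lee_fin lerD2l lerN2 lef_pV2 ?posrE ?ler_nat //.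
  + by move=> n; rewrite lte_fin ltrBlDr ltrDl invr_gt0.
  + case=> [r'||] //; last by exists 0%N; rewrite leNye.
    rewrite lte_fin => /ltr_add_invr [k hk]; exists k.
    by rewrite lee_fin lerBrDr ltW.
- exists (fun n => n%:R%:E); split.
  + by move=> n m nm; rewrite lee_fin ler_nat.
  + by move=> n; rewrite ltry.
  + case=> [r'||] //; last by exists 0%N; rewrite leNye.
    move=> _; exists (Num.bound `|r'|); rewrite lee_fin.
    exact: le_trans (ler_norm r') (ltW (archi_boundP _)).
Qed.

End ereal_cofinal.

Lemma continuous_EFin (R : realFieldType) : continuous (@EFin R).
Proof. by move=> t; apply: cvg_EFin; [exact: nearW | exact: cvg_id]. Qed.

Lemma probability_setC_le d (X : measurableType d) (R : realType)
    (Q : probability X R) (C : set X) (r : R) : measurable C ->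
  (Q (~` C) <= r%:E)%E = ((1 - r)%:E <= Q C)%E.
Proof.
move=> mC; rewrite probability_setC //.
have QCfin : Q C \is a fin_num.
  by rewrite ge0_fin_numE ?measure_ge0 // (le_lt_trans (probability_le1 Q mC)) ?ltry.
rewrite -(fineK QCfin) !lee_fin; apply/idP/idP => ?; lra.
Qed.

Lemma measure_nondecreasing_bigcup_le d (T : ringOfSetsType d) (R : realFieldType)
    (mu : {measure set T -> \bar R}) (F : nat -> set T) (a : \bar R) :
  (forall n, measurable (F n)) -> measurable (\bigcup_n F n) ->
  nondecreasing_seq F -> (forall n, (mu (F n) <= a)%E) ->
  (mu (\bigcup_n F n) <= a)%E.
Proof.
move=> mF mUF ndF Fa; have cvF := nondecreasing_cvg_mu (mu := mu) mF mUF ndF.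
rewrite -(cvg_lim _ cvF) //; apply: lime_le; last exact: nearW.
by apply/cvg_ex; exists (mu (\bigcup_n F n)).
Qed.

Section pvalue.
Context {d : measure_display} {X : measurableType d} {R : realType}.
Variables (mu : {measure set X -> \bar R}) (T : X -> \bar R).
Hypothesis mT : measurable_fun setT T.
Local Open Scope ereal_scope.

Definition pvalue (y : X) : \bar R := mu [set z | T z <= T y].

Lemma measurable_sublevel (c : \bar R) : measurable [set z | T z <= c].
Proof. by rewrite -[X in measurable X]setTI; exact: measurable_lee. Qed.

Lemma measurable_strict_sublevel (c : \bar R) : measurable [set z | T z < c].
Proof. by rewrite -[X in measurable X]setTI; exact: measurable_lte. Qed.

Lemma measure_strict_sublevel_le (s a : \bar R) : 0 <= a ->
  (forall c, c < s -> mu [set z | T z <= c] <= a) ->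
  mu [set z | T z < s] <= a.
Proof.
move=> a0 bound; have [->|sNy] := eqVneq s -oo.
  suff -> : [set z | T z < -oo] = set0 by rewrite measure0.
  by apply/seteqP; split => z //=; rewrite ltNge leNye.
have [u [ndu ltu cofu]] := ereal_cofinal_seq sNy.
have -> : [set z | T z < s] = \bigcup_n [set z | T z <= u n].
  apply/seteqP; split => z /=; first by move/cofu => [n zn]; exists n.
  by move=> [n _ zn]; exact: le_lt_trans zn (ltu n).
apply: measure_nondecreasing_bigcup_le => [n||n m nm|n].
- exact: measurable_sublevel.
- by apply: bigcupT_measurable => n; exact: measurable_sublevel.
- by apply/subsetPset => z /= zn; exact: le_trans zn (ndu _ _ nm).
- exact: bound.
Qed.

Lemma measure_down_closed_le (B : set X) (a : \bar R) : 0 <= a ->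
  (forall y z, B y -> T z <= T y -> B z) ->
  (forall y, B y -> mu [set z | T z <= T y] <= a) ->
  measurable B /\ mu B <= a.
Proof.
move=> a0 down bound; pose s := ereal_sup (T @` B).
(* B is {T <= s} or {T < s}, according as the supremum s is attained on B. *)
have leTs y : B y -> T y <= s by move=> By; apply: ereal_sup_ubound; exists y.
have [[y1 By1 Ty1]|nomax] := pselect (exists2 y, B y & T y = s).
  have -> : B = [set z | T z <= T y1].
    apply/seteqP; split => z; first by rewrite /= Ty1; exact: leTs.
    exact: down By1.
  by split; [exact: measurable_sublevel | exact: bound].
have -> : B = [set z | T z < s].
  apply/seteqP; split => z /=.
    move=> Bz; rewrite lt_neqAle leTs // andbT.
    by apply/eqP => Tzs; apply: nomax; exists z.
  by move=> /ereal_sup_gt [_ [y By <-] zy]; exact: down By (ltW zy).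
split; first exact: measurable_strict_sublevel.
apply: measure_strict_sublevel_le => // c /ereal_sup_gt [_ [y By <-] cy].
apply: le_trans (bound _ By); apply: le_measure; rewrite ?inE.
- exact: measurable_sublevel.
- exact: measurable_sublevel.
- by move=> z /= zc; exact: le_trans zc (ltW cy).
Qed.

Lemma measure_pvalue_le (a : \bar R) : 0 <= a ->
  measurable [set y | pvalue y <= a] /\ mu [set y | pvalue y <= a] <= a.
Proof.
move=> a0; apply: measure_down_closed_le => // y z /= pya zy.
apply: le_trans pya; apply: le_measure; rewrite ?inE.
- exact: measurable_sublevel.
- exact: measurable_sublevel.
- by move=> w /= wz; exact: le_trans wz zy.
Qed.

End pvalue.

Section closed_hull.
Context {R : realType}.
Implicit Types (A K : set R).

Lemma cl_hull_closed A : closed (cl_hull A).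
Proof. by apply: closed_bigI => B [cB _]. Qed.

Lemma cl_hull_is_interval A : is_interval (cl_hull A).
Proof.
move=> a b ha hb z hz B [cB [iB AB]].
exact: iB a b (ha B (conj cB (conj iB AB))) (hb B (conj cB (conj iB AB))) z hz.
Qed.

Lemma sub_cl_hull A : A `<=` cl_hull A.
Proof. by move=> a Aa B [_ [_ AB]]; exact: AB. Qed.

Lemma cl_hull_sub A K : closed K -> is_interval K -> A `<=` K -> cl_hull A `<=` K.
Proof. by move=> cK iK AK z hz; exact: hz K (conj cK (conj iK AK)). Qed.

Local Open Scope ereal_scope.

Lemma closed_ereal_inf_mem K t : closed K ->
  ereal_inf [set x%:E | x in K] = t%:E -> K t.
Proof.
move=> cK Kt.
have K0 : K !=set0.
  by apply/set0P/negP => /eqP K0; move: Kt; rewrite K0 image_set0 ereal_inf0.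
apply: (itv_closed_infimums K0 cK); split.
  by move=> k Kk; rewrite -lee_fin -Kt; apply: ereal_inf_lbound; exists k.
move=> y ly; rewrite -lee_fin -Kt; apply: le_ereal_inf_tmp => _ [k Kk <-].
by rewrite lee_fin; exact: ly.
Qed.

Lemma closed_ereal_sup_mem K t : closed K ->
  ereal_sup [set x%:E | x in K] = t%:E -> K t.
Proof.
move=> cK Kt.
have K0 : K !=set0.
  by apply/set0P/negP => /eqP K0; move: Kt; rewrite K0 image_set0 ereal_sup0.
apply: (itv_closed_supremums K0 cK); split.
  by move=> k Kk; rewrite -lee_fin -Kt; apply: ereal_sup_ubound; exists k.
move=> y ly; rewrite -lee_fin -Kt; apply: ge_ereal_sup => _ [k Kk <-].
by rewrite lee_fin; exact: ly.
Qed.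

Lemma closed_interval_ereal_inf_sup K : closed K -> is_interval K ->
  [set t | ereal_inf [set x%:E | x in K] <= t%:E <= ereal_sup [set x%:E | x in K]]
  = K.
Proof.
move=> cK iK; apply/seteqP; split => t /=; last first.
  by move=> Kt; rewrite ereal_inf_lbound ?ereal_sup_ubound //; exists t.
case/andP; rewrite le_eqVlt => /orP[/eqP it|it]; first by move=> _; exact: closed_ereal_inf_mem it.
rewrite le_eqVlt => /orP[/eqP ts|ts]; first exact: closed_ereal_sup_mem (esym ts).
have [_ [a Ka <-] ?] := ereal_inf_lt it.
have [_ [b Kb <-] ?] := ereal_sup_gt ts.
by apply: (iK a b Ka Kb); rewrite -!lee_fin !ltW.
Qed.

End closed_hull.

Section modified_interval.
Context {d : measure_display} {X : measurableType d} {R : realType} {Eta : Type}.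
Variables (H : set (R * Eta)) (P : R * Eta -> probability X R) (alpha : R).
Implicit Types (L U : X -> \bar R).
Local Open Scope ereal_scope.

Lemma closed_ival L U x : closed (ival L U x).
Proof.
have -> : ival L U x = EFin @^-1` ([set y | L x <= y] `&` [set y | y <= U x]).
  by apply/seteqP; split => t /= /andP.
apply: preimage_closed; first by move=> t _; exact: continuous_EFin.
by apply: closedI; [exact: closed_ereal_le_ereal | exact: closed_ereal_ge_ereal].
Qed.

Lemma ival_is_interval L U x : is_interval (ival L U x).
Proof.
move=> a b /andP[La _] /andP[_ Ub] z /andP[az zb]; apply/andP; split.
  by apply: le_trans La _; rewrite lee_fin.
by apply: le_trans Ub; rewrite lee_fin.
Qed.

Lemma ival_modLU L U x :
  ival (modL H P alpha L U) (modU H P alpha L U) x = modCI H P alpha L U x.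
Proof.
by apply: closed_interval_ereal_inf_sup; [exact: cl_hull_closed | exact: cl_hull_is_interval].
Qed.

Lemma Tstat_ge0 L U y t : (0 <= Tstat L U y t) = (L y <= t%:E <= U y).
Proof. by rewrite /Tstat le_min !sube_ge0 // ?orbT. Qed.

Lemma measurable_Tstat L U t :
  measurable_fun setT L -> measurable_fun setT U ->
  measurable_fun setT (fun y => Tstat L U y t).
Proof.
move=> mL mU; apply: measurable_mine.
  exact: emeasurable_funB (measurable_cst _) mL.
exact: emeasurable_funB mU (measurable_cst _).
Qed.

Lemma measurable_ival_at L U t :
  measurable_fun setT L -> measurable_fun setT U ->
  measurable [set y | ival L U y t].
Proof.
move=> mL mU; have -> : [set y | ival L U y t] = [set y | 0 <= Tstat L U y t].
  by apply/seteqP; split => y /=; rewrite Tstat_ge0.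
rewrite -[X in measurable X]setTI.
exact: measurable_lee (measurable_cst _) (measurable_Tstat t mL mU).
Qed.

Lemma modCI_sub_exact L U :
  measurable_fun setT L -> measurable_fun setT U ->
  exact_ci H P alpha L U -> forall x, modCI H P alpha L U x `<=` ival L U x.
Proof.
move=> mL mU exactLU x.
apply: cl_hull_sub; [exact: closed_ival | exact: ival_is_interval |].
move=> t /=; apply: contraPP => notC; apply/negP; rewrite -leNgt.
apply: ge_ereal_sup => _ [p [Hp pt] <-]; subst t.
have Tx_lt0 : Tstat L U x p.1 < 0 by rewrite ltNge Tstat_ge0; exact/negP.
apply: (@le_trans _ _ (P p (~` [set y | ival L U y p.1]))).
  apply: le_measure; rewrite ?inE.
  - exact: measurable_sublevel (measurable_Tstat _ mL mU) _.
  - exact/measurableC/measurable_ival_at.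
  - move=> y /= Ty Cy; rewrite /ival /= -Tstat_ge0 in Cy.
    by have := le_lt_trans (le_trans Cy Ty) Tx_lt0; rewrite ltxx.
rewrite probability_setC_le; last exact: measurable_ival_at.
exact: exactLU.
Qed.

Lemma exact_ci_modCI L U : (0 <= alpha)%R ->
  measurable_fun setT L -> measurable_fun setT U ->
  measurable_fun setT (modL H P alpha L U) ->
  measurable_fun setT (modU H P alpha L U) ->
  exact_ci H P alpha (modL H P alpha L U) (modU H P alpha L U).
Proof.
rewrite -lee_fin => alpha0 mL mU mmL mmU p Hp.
rewrite -probability_setC_le; last exact: measurable_ival_at.
have [mB PB] := measure_pvalue_le (P p) (measurable_Tstat p.1 mL mU) alpha0.
apply: le_trans PB; apply: le_measure; rewrite ?inE //.
  exact/measurableC/measurable_ival_at.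
move=> y /= notC; rewrite leNgt; apply/negP => alpha_lt; apply: notC.
rewrite ival_modLU; apply: sub_cl_hull; apply: lt_le_trans alpha_lt _.
by apply: ereal_sup_ubound; exists p.
Qed.

End modified_interval.

Theorem theorem2 (d : measure_display) (X : measurableType d) (R : realType)
  (Eta : Type) (H : set (R * Eta)) (P : R * Eta -> probability X R)
  (alpha : R) (ha0 : 0 <= alpha) (ha1 : alpha <= 1) :
  (forall L U : X -> \bar R,
     measurable_fun [set: X] L -> measurable_fun [set: X] U ->
     exact_ci H P alpha L U ->
     forall x, modCI H P alpha L U x `<=` ival L U x)
  /\
  (forall L U : X -> \bar R,
     measurable_fun [set: X] L -> measurable_fun [set: X] U ->
     measurable_fun [set: X] (modL H P alpha L U) ->
     measurable_fun [set: X] (modU H P alpha L U) ->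
     forall x, modCI H P alpha (modL H P alpha L U) (modU H P alpha L U) x
               `<=` modCI H P alpha L U x).
Proof.
split; first exact: modCI_sub_exact.
move=> L U mL mU mmL mmU x.
have := modCI_sub_exact mmL mmU (exact_ci_modCI ha0 mL mU mmL mmU) (x := x).
by rewrite ival_modLU.
Qed.
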